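(* Let $q\in\mathbb{N}\setminus\{1\}$, let $X$ be the geometric armadillo tail with parameter $r=\frac1q$, and let $k>2$ be an integer. Then there exists a saddle connection, called $\mathrm{bsc}_k'$, namely the straight-line trajectory of slope $\frac{q}{2q-1}$ starting at the singular point $(1+\frac1q+\dots+\frac1{q^{k-1}},0)$ (the lower right vertex of $\square_k$): this trajectory reaches the singularity again after finite length without passing through it in between.
   Context: Set $l_k=q^{-(k-1)}$, $s_k=l_1+\dots+l_k$ ($s_0=0$), and $\square_k=[s_{k-1},s_k]\times[0,l_k]\subset\mathbb{R}^2$. The geometric armadillo tail with parameter $\frac1q$ is obtained from $P=\bigcup_k\square_k$ by gluing the top edge of each $\square_k$ to its bottom edge by vertical translation, and for each $k\ge1$ gluing $\{s_k\}\times[l_{k+1},l_k]$ by horizontal translation to $\{0\}\times[l_{k+1},l_k]$; then taking the metric completion, in which all vertices of $P$ become a single wild singularity. Trajectories and slopes are computed in the polygonal representation $P$ with these gluings. A saddle connection is a closed straight-line segment from the singularity to itself with no singular point in its interior. *)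

From Stdlib Require Import Reals List Lra Lia.
Open Scope R_scope.

(* l_k = q^{-(k-1)}  (meaningful for k >= 1) *)
Definition l (q k : nat) : R := (/ INR q) ^ (k - 1).

Fixpoint s (q k : nat) : R :=
  match k with
  | O => 0
  | S k' => s q k' + l q (S k')
  end.

Definition inP (q : nat) (p : R * R) : Prop :=
  exists k : nat, (1 <= k)%nat /\
    s q (k - 1) <= fst p <= s q k /\ 0 <= snd p <= l q k.

(* Vertices of P (all identified to the single wild singularity):
   (s_k, 0) for k >= 0, and for k >= 1 the points (s_{k-1}, l_k), (s_k, l_k)
   and (0, l_k) (the endpoints of the pieces of the left edge of square 1
   glued to the pieces {s_k} x [l_{k+1}, l_k]).  Note (s_k, l_{k+1}) is
   (s_{(k+1)-1}, l_{k+1}). *)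
Definition is_vertex (q : nat) (p : R * R) : Prop :=
  (exists k : nat, p = (s q k, 0)) \/
  (exists k : nat, (1 <= k)%nat /\
     (p = (s q (k - 1), l q k) \/ p = (s q k, l q k) \/ p = (0, l q k))).

Definition glue_pair (q : nat) (p p' : R * R) : Prop :=
  exists k : nat, (1 <= k)%nat /\
   ((exists x : R, s q (k - 1) <= x <= s q k /\ p = (x, l q k) /\ p' = (x, 0)) \/
    (exists y : R, l q (S k) <= y <= l q k /\ p = (s q k, y) /\ p' = (0, y))).

Definition glue (q : nat) (p p' : R * R) : Prop :=
  p = p' \/ glue_pair q p p' \/ glue_pair q p' p.

(* A piece of trajectory: a start point and a length parameter t; it is the
   segment { start + tau * v | 0 <= tau <= t }. *)
Definition piece := ((R * R) * R)%type.
Definition piece0 : piece := ((0, 0), 0).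

Definition at_time (v : R * R) (c : piece) (tau : R) : R * R :=
  (fst (fst c) + tau * fst v, snd (fst c) + tau * snd v).

Definition piece_end (v : R * R) (c : piece) : R * R := at_time v c (snd c).

(* A saddle connection of X in direction v starting at the vertex p0, given in the
   polygonal representation P as a finite chain of straight segments in P,
   consecutive ones joined through the gluings, starting and ending at the
   singularity, with no singular point in between. *)
Definition saddle_connection_from (q : nat) (p0 v : R * R) (L : list piece) : Prop :=
  L <> nil /\
  fst (nth 0 L piece0) = p0 /\ is_vertex q p0 /\
  (forall i : nat, (i < length L)%nat ->
     0 < snd (nth i L piece0) /\
     (forall tau : R, 0 <= tau <= snd (nth i L piece0) ->
        inP q (at_time v (nth i L piece0) tau)) /\
     (forall tau : R, 0 < tau < snd (nth i L piece0) ->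
        ~ is_vertex q (at_time v (nth i L piece0) tau))) /\
  (forall i : nat, (S i < length L)%nat ->
     ~ is_vertex q (piece_end v (nth i L piece0)) /\
     ~ is_vertex q (fst (nth (S i) L piece0)) /\
     glue q (piece_end v (nth i L piece0)) (fst (nth (S i) L piece0))) /\
  is_vertex q (piece_end v (last L piece0)).

(* A trajectory of slope q/(2q-1) rises exactly by l_j while running
   horizontally by l_j (2 - 1/q).  Hence, after entering square 1 from its left
   edge at height e*q/(2q-1), it meets the bottom edge of every square j it
   crosses at distance l_(j+1) + e from that square's right edge: the offset e
   is preserved while the trajectory descends through the squares, and it
   increases by l_(n+2) whenever the trajectory leaves square n+1 through its
   glued right edge and re-enters square 1.  Starting from (s_k, 0) the
   offsets are 1/q^k, 2/q^k, ..., (q-1)/q^k (the first segment, across square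
   k+1, ends like a lap with offset (q-1)/q^(k+1)); with the last one the
   trajectory hits the corner (s_(k-1), l_k) exactly. *)

From Stdlib Require Import Reals List Lra Lia.
Open Scope R_scope.
Import ListNotations.

Lemma pow_le_decr (x : R) (i j : nat) :
  0 < x <= 1 -> (i <= j)%nat -> x ^ j <= x ^ i.
Proof.
  intros [x_pos x_le1] ij. induction ij as [|j _ IH]; [lra|].
  simpl. pose proof (pow_lt x j x_pos). nra.
Qed.

Section ArmadilloTail.

Variable q : nat.
Hypothesis q_ge2 : (2 <= q)%nat.

Local Notation r := (/ INR q).
Local Notation slope := (INR q / (2 * INR q - 1)).
Local Notation dir := (2 * INR q - 1, INR q).

Lemma INR_q_ge2 : 2 <= INR q.
Proof. apply (le_INR 2) in q_ge2. simpl in q_ge2. lra. Qed.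

Lemma r_pos : 0 < r.
Proof. pose proof INR_q_ge2. apply Rinv_0_lt_compat. lra. Qed.

Lemma r_le_half : r <= / 2.
Proof. pose proof INR_q_ge2. apply Rinv_le_contravar; lra. Qed.

Lemma slope_mul_2_sub_r : slope * (2 - r) = 1.
Proof. pose proof INR_q_ge2. field. lra. Qed.

Lemma slope_bounds : / 2 < slope < 1.
Proof.
  pose proof INR_q_ge2.
  split; apply Rmult_lt_reg_r with (2 * INR q - 1); try lra;
    unfold Rdiv; rewrite Rmult_assoc, Rinv_l; lra.
Qed.

Ltac tail_facts :=
  pose proof r_pos; pose proof r_le_half;
  pose proof slope_mul_2_sub_r; pose proof slope_bounds.

Lemma pow_r_pos (j : nat) : 0 < r ^ j.
Proof. exact (pow_lt _ j r_pos). Qed.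

Lemma pow_r_decr (i j : nat) : (i <= j)%nat -> r ^ j <= r ^ i.
Proof. tail_facts. apply pow_le_decr. lra. Qed.

Lemma l_S (j : nat) : l q (S j) = r ^ j.
Proof. unfold l. now rewrite Nat.sub_1_r. Qed.

Lemma s_S (j : nat) : s q (S j) = s q j + r ^ j.
Proof. simpl. now rewrite l_S. Qed.

Lemma s_1 : s q 1 = 1.
Proof. rewrite s_S. simpl. ring. Qed.

Lemma s_le (i j : nat) : (i <= j)%nat -> s q i <= s q j.
Proof.
  intros ij. induction ij as [|j _ IH]; [lra|].
  rewrite s_S. pose proof (pow_r_pos j). lra.
Qed.

Lemma s_nonneg (j : nat) : 0 <= s q j.
Proof. apply (s_le 0). lia. Qed.

Lemma not_vertex_between_s (a : nat) (x y : R) :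
  s q a < x < s q (S a) -> ~ is_vertex q (x, y).
Proof.
  intros hx.
  assert (x_not_s : forall j, x <> s q j).
  { intros j ->. destruct (Nat.le_gt_cases j a) as [h|h].
    all: pose proof (s_le _ _ h); lra. }
  pose proof (s_nonneg a).
  intros [[j E] | [j [_ [E | [E | E]]]]]; injection E as -> ->;
    solve [eapply x_not_s; eauto | lra].
Qed.

Lemma not_vertex_between_l (b : nat) (x y : R) :
  r ^ S b < y < r ^ b -> ~ is_vertex q (x, y).
Proof.
  intros hy.
  assert (y_not_l : forall j, y <> l q j).
  { intros j ->. unfold l in hy. destruct (Nat.le_gt_cases (j - 1) b) as [h|h].
    all: pose proof (pow_r_decr _ _ h); lra. }
  pose proof (pow_r_pos (S b)).
  intros [[j E] | [j [_ [E | [E | E]]]]]; injection E as -> ->;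
    solve [eapply y_not_l; eauto | lra].
Qed.

Lemma inP_square (j : nat) (x y : R) :
  s q j <= x <= s q (S j) -> 0 <= y <= r ^ j -> inP q (x, y).
Proof.
  intros hx hy. exists (S j). simpl fst; simpl snd.
  rewrite Nat.sub_succ, Nat.sub_0_r, l_S. split; [lia | auto].
Qed.

Lemma glue_top (j : nat) (x : R) :
  s q j <= x <= s q (S j) -> glue q (x, r ^ j) (x, 0).
Proof.
  intros hx. right; left. exists (S j). split; [lia|].
  left. exists x. rewrite Nat.sub_succ, Nat.sub_0_r, l_S. auto.
Qed.

Lemma glue_right (j : nat) (y : R) :
  r ^ S j <= y <= r ^ j -> glue q (s q (S j), y) (0, y).
Proof.
  intros hy. right; left. exists (S j). split; [lia|].
  right. exists y. rewrite !l_S. auto.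
Qed.

Definition valid_piece (c : piece) : Prop :=
  0 < snd c /\
  (forall tau, 0 <= tau <= snd c -> inP q (at_time dir c tau)) /\
  (forall tau, 0 < tau < snd c -> ~ is_vertex q (at_time dir c tau)).

Definition linked (a b : piece) : Prop :=
  ~ is_vertex q (piece_end dir a) /\ ~ is_vertex q (fst b) /\
  glue q (piece_end dir a) (fst b).

Inductive chain : piece -> list piece -> piece -> Prop :=
| chain_one a : valid_piece a -> chain a [a] a
| chain_cons a b L z :
    valid_piece a -> linked a b -> chain b L z -> chain a (a :: L) z.

Lemma chain_app (a z b y : piece) (L1 L2 : list piece) :
  chain a L1 z -> linked z b -> chain b L2 y -> chain a (L1 ++ L2) y.
Proof.
  intros H. induction H; intros; simpl; eapply chain_cons; eauto.
Qed.

Lemma chain_spec (a z : piece) (L : list piece) : chain a L z ->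
  (exists L', L = a :: L') /\ last L piece0 = z /\
  (forall i, (i < length L)%nat -> valid_piece (nth i L piece0)) /\
  (forall i, (S i < length L)%nat ->
     linked (nth i L piece0) (nth (S i) L piece0)).
Proof.
  induction 1 as [a Ha | a b L z Ha Hab _ [[L' ->] [Hlast [Hvalid Hlinked]]]].
  - split; [eauto|]. split; [reflexivity|].
    split; intros [|i] hi; simpl in *; auto; lia.
  - split; [eauto|]. split; [exact Hlast|].
    split; intros [|i] hi; simpl in *; auto; [apply Hvalid | apply Hlinked]; lia.
Qed.

Lemma chain_saddle_connection (p0 : R * R) (a z : piece) (L : list piece) :
  chain a L z -> fst a = p0 -> is_vertex q p0 ->
  is_vertex q (piece_end dir z) -> saddle_connection_from q p0 dir L.
Proof.
  intros H ha hv hz.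
  destruct (chain_spec _ _ _ H) as [[L' ->] [Hlast [Hvalid Hlinked]]].
  repeat split; auto; try discriminate;
    solve [now apply Hvalid | now apply Hlinked | now rewrite Hlast].
Qed.

(* A segment of direction [dir] is described by its horizontal run [d]. *)
Definition seg (x0 y0 d : R) : piece := ((x0, y0), d / (2 * INR q - 1)).

Lemma at_time_seg (x0 y0 d tau : R) :
  at_time dir (seg x0 y0 d) tau =
  (x0 + tau * (2 * INR q - 1), y0 + tau * (2 * INR q - 1) * slope).
Proof.
  pose proof INR_q_ge2. unfold at_time, seg. simpl. f_equal. field. lra.
Qed.

Lemma seg_end (x0 y0 d : R) :
  piece_end dir (seg x0 y0 d) = (x0 + d, y0 + d * slope).
Proof.
  pose proof INR_q_ge2. unfold piece_end, at_time, seg. simpl.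
  f_equal; field; lra.
Qed.

Lemma valid_seg (x0 y0 d : R) : 0 < d ->
  (forall t, 0 <= t <= d -> inP q (x0 + t, y0 + t * slope)) ->
  (forall t, 0 < t < d -> ~ is_vertex q (x0 + t, y0 + t * slope)) ->
  valid_piece (seg x0 y0 d).
Proof.
  intros hd Hin Hnv. pose proof INR_q_ge2.
  assert (run_pos : 0 < 2 * INR q - 1) by lra.
  assert (run_d : d / (2 * INR q - 1) * (2 * INR q - 1) = d) by (field; lra).
  split; [apply Rdiv_lt_0_compat; lra|].
  split; intros tau [h0 h1]; rewrite at_time_seg; simpl snd in h1;
    [apply Hin | apply Hnv]; split; nra.
Qed.

Definition bottom_seg (j : nat) (e : R) : piece :=
  seg (s q j - r ^ j - e) 0 (r ^ j + e).

(* Crosses square [j+1] from its left edge to its top edge. *)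
Definition left_seg (j : nat) (e : R) : piece :=
  seg (s q j) ((r ^ j + e) * slope) (r ^ j - r ^ S j - e).

Definition entry_seg (e : R) : piece := seg 0 (e * slope) 1.

Lemma valid_bottom_seg (n : nat) (e : R) :
  0 <= e <= r ^ n * (1 - r) -> valid_piece (bottom_seg (S n) e).
Proof.
  intros he. tail_facts. pose proof (pow_r_pos n).
  unfold bottom_seg. rewrite s_S. simpl pow.
  apply valid_seg; try nra; intros t ht.
  - apply (inP_square n); [rewrite s_S|]; nra.
  - apply (not_vertex_between_s n). rewrite s_S. nra.
Qed.

Lemma valid_left_seg (j : nat) (e : R) :
  0 <= e < r ^ j * (1 - r) -> valid_piece (left_seg j e).
Proof.
  intros he. tail_facts. pose proof (pow_r_pos j).
  unfold left_seg. simpl pow.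
  apply valid_seg; try nra; intros t ht.
  - apply (inP_square j); [rewrite s_S; nra|].
    assert ((r ^ j + e + t) * slope <= (r ^ j * (2 - r)) * slope)
      by (apply Rmult_le_compat_r; nra).
    nra.
  - apply (not_vertex_between_s j). rewrite s_S. nra.
Qed.

Lemma valid_entry_seg (e : R) : 0 <= e <= 1 - r -> valid_piece (entry_seg e).
Proof.
  intros he. tail_facts.
  apply valid_seg; try lra; intros t ht.
  - apply (inP_square 0); rewrite ?s_1; simpl; [lra|].
    assert ((e + t) * slope <= (2 - r) * slope)
      by (apply Rmult_le_compat_r; lra).
    nra.
  - apply (not_vertex_between_s 0). rewrite s_1. simpl. lra.
Qed.

Lemma linked_bottom_left (j : nat) (e : R) :
  0 <= e < r ^ j * (1 - r) -> linked (bottom_seg j e) (left_seg j e).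
Proof.
  intros he. tail_facts. pose proof (pow_r_pos j).
  unfold linked, bottom_seg, left_seg. rewrite seg_end. cbn [fst].
  replace (s q j - r ^ j - e + (r ^ j + e)) with (s q j) by ring.
  replace (0 + (r ^ j + e) * slope) with ((r ^ j + e) * slope) by ring.
  assert (hy : r ^ S j < (r ^ j + e) * slope < r ^ j) by (simpl; split; nra).
  split; [|split]; [apply (not_vertex_between_l j); auto.. | now left].
Qed.

Lemma linked_left_bottom (j : nat) (e : R) :
  0 <= e < r ^ j * (1 - r) -> linked (left_seg j e) (bottom_seg (S j) e).
Proof.
  intros he. tail_facts. pose proof (pow_r_pos j).
  unfold linked, left_seg, bottom_seg. rewrite seg_end, s_S. cbn [fst]. simpl pow.
  replace (s q j + r ^ j - r * r ^ j - e) with (s q j + (r ^ j - r * r ^ j - e))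
    by ring.
  replace ((r ^ j + e) * slope + (r ^ j - r * r ^ j - e) * slope)
    with (r ^ j * (slope * (2 - r))) by ring.
  rewrite slope_mul_2_sub_r, Rmult_1_r.
  assert (hx : s q j < s q j + (r ^ j - r * r ^ j - e) < s q (S j))
    by (rewrite s_S; nra).
  split; [|split]; [apply (not_vertex_between_s j); auto.. |].
  apply glue_top. lra.
Qed.

Lemma linked_entry_left (e : R) :
  0 <= e < 1 - r -> linked (entry_seg e) (left_seg 0 e).
Proof.
  intros he. tail_facts.
  unfold linked, entry_seg, left_seg. rewrite seg_end. cbn [fst]. simpl pow.
  replace (e * slope + 1 * slope) with ((1 + e) * slope) by ring.
  assert (hy : r ^ 1 < (1 + e) * slope < r ^ 0) by (simpl; split; nra).
  replace (0 + 1) with (s q 1) by (rewrite s_1; ring).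
  split; [|split]; [apply (not_vertex_between_l 0); auto.. |].
  apply glue_right. lra.
Qed.

Lemma linked_bottom_entry (n : nat) (e : R) :
  r ^ S n * (1 - r) < e <= r ^ n * (1 - r) ->
  linked (bottom_seg (S n) e) (entry_seg (e + r ^ S n)).
Proof.
  intros he. tail_facts. pose proof (pow_r_pos n).
  unfold linked, bottom_seg, entry_seg. rewrite seg_end. cbn [fst].
  replace (s q (S n) - r ^ S n - e + (r ^ S n + e)) with (s q (S n)) by ring.
  replace (0 + (r ^ S n + e) * slope) with ((e + r ^ S n) * slope) by ring.
  assert (hy : r ^ S n < (e + r ^ S n) * slope < r ^ n) by (simpl in *; split; nra).
  split; [|split]; [apply (not_vertex_between_l n); auto.. |].
  apply glue_right. lra.
Qed.

Lemma bottom_seg_ends_at_corner (n : nat) :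
  is_vertex q (piece_end dir (bottom_seg (S n) (r ^ S n * (1 - r)))).
Proof.
  tail_facts. unfold bottom_seg. rewrite seg_end.
  right. exists (S (S n)). split; [lia|]. left.
  rewrite l_S. simpl Nat.sub. f_equal; [ring|].
  replace (0 + (r ^ S n + r ^ S n * (1 - r)) * slope)
    with (r ^ S n * (slope * (2 - r))) by ring.
  rewrite slope_mul_2_sub_r. ring.
Qed.

Fixpoint descent (j n : nat) (e : R) : list piece :=
  left_seg j e :: bottom_seg (S j) e ::
  match n with O => [] | S n' => descent (S j) n' e end.

Lemma descent_chain (e : R) (n j : nat) : 0 <= e < r ^ (j + n) * (1 - r) ->
  chain (left_seg j e) (descent j n e) (bottom_seg (S (j + n)) e).
Proof.
  tail_facts. revert j. induction n as [|n IH]; intros j he.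
  - rewrite Nat.add_0_r in *.
    apply chain_cons with (bottom_seg (S j) e).
    + now apply valid_left_seg.
    + now apply linked_left_bottom.
    + apply chain_one, valid_bottom_seg. lra.
  - assert (e_lt_j : e < r ^ j * (1 - r))
      by (pose proof (pow_r_decr j (j + S n) ltac:(lia)); nra).
    apply chain_cons with (bottom_seg (S j) e).
    + now apply valid_left_seg.
    + now apply linked_left_bottom.
    + rewrite Nat.add_succ_r, <- Nat.add_succ_l in *.
      pose proof (pow_r_decr (S j) (S j + n) ltac:(lia)).
      apply chain_cons with (left_seg (S j) e).
      * apply valid_bottom_seg. lra.
      * apply linked_bottom_left. nra.
      * now apply IH.
Qed.

Definition lap (n : nat) (e : R) : list piece := entry_seg e :: descent 0 n e.

Lemma lap_chain (n : nat) (e : R) : 0 <= e < r ^ n * (1 - r) ->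
  chain (entry_seg e) (lap n e) (bottom_seg (S n) e).
Proof.
  intros he. tail_facts.
  pose proof (pow_r_decr 0 n ltac:(lia)). simpl in *.
  apply chain_cons with (left_seg 0 e).
  - apply valid_entry_seg. nra.
  - apply linked_entry_left. nra.
  - now apply (descent_chain e n 0).
Qed.

Lemma offset_last (n : nat) : INR (q - 1) * r ^ S n = r ^ n * (1 - r).
Proof.
  pose proof INR_q_ge2. rewrite minus_INR by lia. simpl. field. lra.
Qed.

(* Laps of depth [n+1] with offsets [c], ..., [q-2] (in units of [r ^ (n+2)]),
   followed by the final lap, of depth [n], with offset [q-1]. *)
Fixpoint laps (n c cnt : nat) : list piece :=
  match cnt with
  | O => lap n (INR c * r ^ S (S n))
  | S cnt' => lap (S n) (INR c * r ^ S (S n)) ++ laps n (S c) cnt'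
  end.

Lemma laps_chain (n cnt c : nat) : (1 <= c)%nat -> (c + cnt = q - 1)%nat ->
  chain (entry_seg (INR c * r ^ S (S n))) (laps n c cnt)
        (bottom_seg (S n) (INR (q - 1) * r ^ S (S n))).
Proof.
  tail_facts. pose proof INR_q_ge2. pose proof (pow_r_pos (S n)).
  revert c. induction cnt as [|cnt IH]; intros c c_ge1 c_cnt; cbn [laps].
  - replace c with (q - 1)%nat by lia. apply lap_chain.
    rewrite offset_last. pose proof (pow_r_pos n).
    assert (0 < r ^ n * (1 - r)) by (apply Rmult_lt_0_compat; lra).
    split; [apply Rmult_le_pos; lra|]. rewrite <- tech_pow_Rmult. nra.
  - assert (c_ge : 1 <= INR c) by (apply (le_INR 1); lia).
    assert (c_r : INR c * r <= 1 - 2 * r).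
    { assert (c_le : INR c + 2 <= INR q)
        by (replace 2 with (INR 2) by reflexivity; rewrite <- plus_INR;
            apply le_INR; lia).
      apply (Rmult_le_compat_r r) in c_le; [|lra].
      rewrite Rinv_r in c_le; lra. }
    assert (offset : INR c * r ^ S (S n) = INR c * r * r ^ S n)
      by (rewrite <- tech_pow_Rmult; ring).
    assert (0 < r ^ S n * (1 - r - INR c * r)) by (apply Rmult_lt_0_compat; lra).
    assert (0 < r * r ^ S n * (INR c - 1 + r))
      by (apply Rmult_lt_0_compat; [apply Rmult_lt_0_compat|]; lra).
    apply chain_app with (bottom_seg (S (S n)) (INR c * r ^ S (S n)))
                         (entry_seg (INR (S c) * r ^ S (S n))).
    + apply lap_chain. rewrite offset.
      split; [apply Rmult_le_pos; nra | nra].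
    + replace (INR (S c) * r ^ S (S n)) with (INR c * r ^ S (S n) + r ^ S (S n))
        by (rewrite S_INR; ring).
      apply linked_bottom_entry. rewrite offset, <- tech_pow_Rmult. split; nra.
    + apply IH; lia.
Qed.

Lemma bsc_saddle_connection (k : nat) : (2 <= k)%nat ->
  exists L : list piece, saddle_connection_from q (s q k, 0) dir L.
Proof.
  intros hk. destruct k as [|[|n]]; try lia.
  set (e0 := r ^ S (S n) * (1 - r)).
  exists (bottom_seg (S (S (S n))) e0 :: laps n 1 (q - 2)).
  tail_facts. pose proof (pow_r_pos (S (S n))).
  apply chain_saddle_connection
    with (bottom_seg (S (S (S n))) e0) (bottom_seg (S n) (INR (q - 1) * r ^ S (S n))).
  - apply chain_cons with (entry_seg (INR 1 * r ^ S (S n))).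
    + apply valid_bottom_seg. unfold e0. split; [nra | lra].
    + replace (INR 1 * r ^ S (S n)) with (e0 + r ^ S (S (S n)))
        by (unfold e0; simpl; ring).
      apply linked_bottom_entry. unfold e0. rewrite <- tech_pow_Rmult.
      assert (0 < r ^ S (S n) * (1 - r)) by (apply Rmult_lt_0_compat; lra).
      split; nra.
    + apply laps_chain; lia.
  - unfold bottom_seg, seg, e0. cbn [fst]. rewrite (s_S (S (S n))). simpl. f_equal. ring.
  - left. eauto.
  - rewrite offset_last. apply bottom_seg_ends_at_corner.
Qed.

End ArmadilloTail.

Theorem theorem3p2 (q k : nat) (hq : (2 <= q)%nat) (hk : (2 < k)%nat) :
  exists L : list piece,
    saddle_connection_from q (s q k, 0) (2 * INR q - 1, INR q) L.
Proof. apply bsc_saddle_connection; lia. Qed.
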